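(* Let $f=a_0+a_1 z+\cdots+a_mz^m\in \mathbb{Z}[z]$ be primitive (the greatest common divisor of its coefficients is $1$). Suppose there exists a positive real number $\alpha$ such that \[ |a_m| \alpha^m>|a_0|+|a_1|\alpha+\cdots+|a_{m-1}|\alpha^{m-1}. \] Further, suppose there exist natural numbers $n$, $d$, $k$, $\ell \leq m$, and a prime $p$ with $p\nmid d$ such that $n\geq \alpha+d$, $f(n)=\pm p^k d$, $\gcd(k,\ell)=1$, $p^k$ divides $\frac{f^{(i)}(n)}{i!}$ for each $i=0, 1, \ldots,\ell-1$, and, in case $k>1$, also $p\nmid \frac{f^{(\ell)}(n)}{\ell!}$. Then $f$ is irreducible in $\mathbb{Z}[z]$.
   Context: $f^{(i)}$ denotes the $i$-th derivative of $f$ with respect to $z$. Natural numbers are positive integers. *)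

From HB Require Import structures.
From mathcomp Require Import all_boot all_order all_algebra.
From mathcomp Require Import all_reals.
Set Implicit Arguments. Unset Strict Implicit. Unset Printing Implicit Defensive.
Import Order.TTheory GRing.Theory Num.Theory.
Local Open Scope ring_scope.

Definition primitive_intpoly (f : {poly int}) : Prop :=
  (\big[gcdn/0%N]_(i < size f) absz (f`_i)%R)%N = 1%N.

Definition irreducible_in_Zz (f : {poly int}) : Prop :=
  f != 0 /\ f \isn't a GRing.unit /\
  forall g h : {poly int}, f = g * h -> g \is a GRing.unit \/ h \is a GRing.unit.

(* Suppose f = g h.  A constant factor divides every coefficient of the primitive f, so it
   is a unit; let g and h be non-constant.  For |z| >= alpha the leading term of f dominates
   the others, so all complex roots of f, hence of g and h, satisfy |z| < alpha; as
   n - alpha >= d, each linear factor n - z of g(n) and h(n) has modulus > d, whence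
   |g(n)|, |h(n)| > d.  From |g(n) h(n)| = p^k d and p ∤ d, p divides both values, so
   k = u + w with u, w >= 1 their p-adic valuations, which already excludes k = 1.
   For k > 1 consider G(X) = g(X + n) and H(X) = h(X + n), whose product has the
   coefficients f^(i)(n)/i!, and weight the i-th coefficient c of a polynomial by
   l v_p(c) + k i.  The last minimisers of the weights of G and H produce a coefficient of
   GH of weight exactly the sum of the two minima (Dumas), and the hypotheses bound it below
   by kl = l u + l w, the weight of the constant terms.  Hence the constant terms attain the
   minima, and as gcd(k, l) = 1 and u, w < k they are the last indices to do so.  Then every
   term of the l-th coefficient of GH has weight > kl, i.e. is divisible by p, contradicting
   p ∤ f^(l)(n)/l!. *)

From HB Require Import structures.
From mathcomp Require Import all_boot all_order all_algebra.
From mathcomp Require Import all_reals.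
From mathcomp Require Import complex zify.
Import Order.TTheory GRing.Theory Num.Theory.
Local Open Scope ring_scope.
Local Open Scope complex_scope.

Definition zlogn (p : nat) (x : int) : nat := logn p `|x|.

Section Valuation.
Variable p : nat.
Hypothesis p_pr : prime p.

Lemma dvdz_pfactor_zlogn e (x : int) :
  x != 0 -> ((p ^ e)%:Z %| x)%Z = (e <= zlogn p x)%N.
Proof. by move=> x0; rewrite dvdzE absz_nat pfactor_dvdn // absz_gt0. Qed.

Lemma zlognM (x y : int) :
  x != 0 -> y != 0 -> zlogn p (x * y) = (zlogn p x + zlogn p y)%N.
Proof. by move=> x0 y0; rewrite /zlogn abszM lognM // absz_gt0. Qed.

Lemma dvdz_pfactor_mul e (x y : int) :
  (e <= zlogn p x + zlogn p y)%N -> ((p ^ e)%:Z %| x * y)%Z.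
Proof.
have [->|x0] := eqVneq x 0; first by rewrite mul0r dvdz0.
have [->|y0] := eqVneq y 0; first by rewrite mulr0 dvdz0.
by rewrite dvdz_pfactor_zlogn ?mulf_neq0 // zlognM.
Qed.

End Valuation.

Lemma ex_last_argmin (P : pred nat) (w : nat -> nat) (b : nat) :
  (exists i, P i) -> (forall i, P i -> (i < b)%N) ->
  exists j, [/\ P j, forall i, P i -> (w j <= w i)%N
              & forall i, P i -> (j < i)%N -> (w j < w i)%N].
Proof.
move=> [i0 Pi0] ltb.
have ex_val : exists m, [exists i : 'I_b, P i && (w i == m)].
  by exists (w i0); apply/existsP; exists (Ordinal (ltb _ Pi0)); rewrite Pi0 eqxx.
case: (ex_minnP ex_val) => mu /existsP[j0 /andP[Pj0 /eqP wj0]] min_mu.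
have le_mu i : P i -> (mu <= w i)%N.
  move=> Pi; apply: min_mu; apply/existsP.
  by exists (Ordinal (ltb _ Pi)); rewrite /= Pi eqxx.
have ex_arg : exists j, P j && (w j == mu) by exists j0; rewrite Pj0 wj0 eqxx.
have le_b j : P j && (w j == mu) -> (j <= b)%N by case/andP=> /ltb/ltnW.
case: (ex_maxnP ex_arg le_b) => j /andP[Pj /eqP wj] max_j.
exists j; split=> // [i Pi|i Pi lt_ji]; rewrite wj ?le_mu //.
rewrite ltn_neqAle le_mu // andbT; apply: contraTneq lt_ji => mu_wi.
by rewrite -leqNgt max_j // Pi -mu_wi eqxx.
Qed.

Section NewtonPolygon.
Variables (p k l : nat).
Hypotheses (p_pr : prime p) (k_gt0 : (0 < k)%N) (l_gt0 : (0 < l)%N)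
  (co_kl : coprime k l).

(* The weight of the point (i, v_p(P_i)) of the Newton diagram of P along the normal to the
   segment from (0, k) to (l, 0). *)
Let weight (P : {poly int}) (i : nat) : nat := (l * zlogn p P`_i + k * i)%N.

Let last_min_weight (P : {poly int}) (j : nat) :=
  [/\ P`_j != 0, forall i, P`_i != 0 -> (weight P j <= weight P i)%N
    & forall i, P`_i != 0 -> (j < i)%N -> (weight P j < weight P i)%N].

Lemma exists_last_min_weight (P : {poly int}) :
  P`_0 != 0 -> exists j, last_min_weight P j.
Proof.
move=> P0; apply: (@ex_last_argmin (fun i => P`_i != 0) _ (size P)).
  by exists 0%N.
by move=> i; apply: contraR; rewrite -leqNgt => /(nth_default 0) ->.
Qed.

Lemma dvdz_coefM_term (G H : {poly int}) m i e : (i <= m)%N ->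
  (G`_i != 0 -> H`_(m - i) != 0 ->
     (l * e + k * m < weight G i + weight H (m - i))%N) ->
  ((p ^ e.+1)%:Z %| G`_i * H`_(m - i))%Z.
Proof.
move=> le_im lt_w.
have [->|Gi0] := eqVneq G`_i 0; first by rewrite mul0r dvdz0.
have [->|Hi0] := eqVneq H`_(m - i) 0; first by rewrite mulr0 dvdz0.
apply: dvdz_pfactor_mul => //; rewrite -(ltn_pmul2l l_gt0).
have km : (k * m = k * i + k * (m - i))%N by rewrite -mulnDr subnKC.
by move: (lt_w Gi0 Hi0); rewrite /weight km mulnDr; lia.
Qed.

Lemma coefM_last_min_weight {G H : {poly int}} {jG jH : nat} :
  last_min_weight G jG -> last_min_weight H jH ->
  ~~ ((p ^ (zlogn p G`_jG + zlogn p H`_jH).+1)%:Z %| (G * H)`_(jG + jH))%Z.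
Proof.
case=> G0 minG ltG [H0 minH ltH].
rewrite coefM (bigD1 (Ordinal (leq_addr jH jG : (jG < (jG + jH).+1)%N))) //=.
rewrite rpredDr.
  by rewrite addKn dvdz_pfactor_zlogn ?mulf_neq0 // zlognM // ltnn.
apply: rpred_sum => i ne_ijG.
have {}ne_ijG : (i : nat) != jG by apply: contraNneq ne_ijG => eq; apply/eqP/val_inj.
move: (nat_of_ord i) (ltn_ord i) ne_ijG => {}i /[!ltnS] le_iJ ne_ijG.
apply: dvdz_coefM_term => // Gi0 Hi0.
have -> : (l * (zlogn p G`_jG + zlogn p H`_jH) + k * (jG + jH)
           = weight G jG + weight H jH)%N by rewrite /weight !mulnDr addnACA.
have [lt_ijG|lt_jGi|/eqP] := ltngtP i jG; last by rewrite (negPf ne_ijG).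
- by rewrite -addnS; apply: leq_add; [exact: minG | apply: ltH => //; lia].
- by rewrite -addSn; apply: leq_add; [exact: ltG | exact: minH].
Qed.

Lemma newton_weight_eq0 {a u j : nat} :
  (l * a + k * j = l * u)%N -> (u < k)%N -> (j <= l)%N -> j = 0%N.
Proof.
move=> w_eq lt_uk le_jl.
have /dvdnP[[|[|q]] def_j] : (l %| j)%N; [|by []| |].
- rewrite -(Gauss_dvdr _ (_ : coprime l k)) 1?coprime_sym //.
  by apply/dvdnP; exists (u - a)%N; rewrite mulnBl !(mulnC _ l) -w_eq addKn.
- move: w_eq; rewrite def_j mul1n (mulnC k l) -mulnDr => /eqP.
  by rewrite eqn_pmul2l // => /eqP def_u; rewrite -def_u ltnNge leq_addl in lt_uk.
- move: le_jl; rewrite def_j mulSn -[X in (_ <= X)%N]addn0 leq_add2l leqn0.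
  by rewrite muln_eq0 (negPf (lt0n_neq0 l_gt0)).
Qed.

Lemma newton_polygon_obstruction (G H : {poly int}) :
  (forall m, (m < l)%N -> ((p ^ k)%:Z %| (G * H)`_m)%Z) ->
  ~~ (p%:Z %| (G * H)`_l)%Z ->
  (0 < zlogn p G`_0)%N -> (0 < zlogn p H`_0)%N ->
  (zlogn p G`_0 + zlogn p H`_0)%N != k.
Proof.
move=> dvd_low ndvd_l vG0 vH0; apply/eqP => v0k.
have nz_of_zlogn (x : int) : (0 < zlogn p x)%N -> x != 0.
  by apply: contraTneq => ->; rewrite /zlogn logn0.
have [jG lmG] := exists_last_min_weight G (nz_of_zlogn _ vG0).
have [jH lmH] := exists_last_min_weight H (nz_of_zlogn _ vH0).
have ndvd_c := coefM_last_min_weight lmG lmH.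
case: lmG lmH => _ minG ltG [_ minH ltH].
have nz_c : (G * H)`_(jG + jH) != 0.
  by apply: contraNneq ndvd_c => ->; apply: dvdz0.
have le_vc : (zlogn p (G * H)`_(jG + jH) <= zlogn p G`_jG + zlogn p H`_jH)%N.
  by rewrite leqNgt -dvdz_pfactor_zlogn.
have ge_wc : (k * l <= l * zlogn p (G * H)`_(jG + jH) + k * (jG + jH))%N.
  have [lt_Jl|le_lJ] := ltnP (jG + jH) l.
    rewrite (mulnC k l) -[(l * k)%N]addn0 leq_add // leq_pmul2l //.
    by rewrite -dvdz_pfactor_zlogn // dvd_low.
  by rewrite -[(k * l)%N]add0n leq_add // leq_pmul2l.
have := minG 0%N (nz_of_zlogn _ vG0); have := minH 0%N (nz_of_zlogn _ vH0).
rewrite /weight !muln0 !addn0 => le_wH le_wG.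
have le_lvc : (l * zlogn p (G * H)`_(jG + jH)
               <= l * zlogn p G`_jG + l * zlogn p H`_jH)%N.
  by rewrite -mulnDr leq_pmul2l.
have eq_lk : (l * zlogn p G`_0 + l * zlogn p H`_0 = k * l)%N.
  by rewrite -mulnDr v0k mulnC.
(* The chain k l <= weight of that coefficient <= sum of the minimal weights
   <= l u + l w = k l is tight. *)
have eq_wG : (l * zlogn p G`_jG + k * jG = l * zlogn p G`_0)%N.
  rewrite mulnDr in ge_wc; clear -le_lvc eq_lk ge_wc le_wH le_wG; lia.
have eq_wH : (l * zlogn p H`_jH + k * jH = l * zlogn p H`_0)%N.
  rewrite mulnDr in ge_wc; clear -le_lvc eq_lk ge_wc le_wH le_wG; lia.
have le_Jl : (jG + jH <= l)%N.
  rewrite -(leq_pmul2l k_gt0) mulnDr; clear -le_lvc eq_lk ge_wc le_wH le_wG; lia.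
have lt_uk : (zlogn p G`_0 < k)%N by rewrite -v0k -addn1 leq_add2l.
have lt_wk : (zlogn p H`_0 < k)%N by rewrite -v0k -add1n leq_add2r.
have jG0 := newton_weight_eq0 eq_wG lt_uk (leq_trans (leq_addr _ _) le_Jl).
have jH0 := newton_weight_eq0 eq_wH lt_wk (leq_trans (leq_addl _ _) le_Jl).
subst jG jH; move/negP: ndvd_l; apply; rewrite coefM; apply: rpred_sum => i _.
move: (nat_of_ord i) (ltn_ord i) => {}i /[!ltnS] le_il.
rewrite -(expn1 p); apply: dvdz_coefM_term => // Gi0 Hi0.
have -> : (l * 0 + k * l = weight G 0 + weight H 0)%N.
  by rewrite /weight !muln0 !addn0 eq_lk.
have [i0|i_gt0] := posnP i.
  subst i; rewrite subn0 in Hi0 *.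
  by rewrite -addnS; apply: leq_add; [exact: minG | exact: ltH].
by rewrite -addSn; apply: leq_add; [exact: ltG | exact: minH].
Qed.

End NewtonPolygon.

Definition lead_dominates {F : numDomainType} (f : {poly int}) (t : F) : bool :=
  \sum_(i < (size f).-1) `|f`_i|%:~R * t ^+ i
    < `|lead_coef f|%:~R * t ^+ (size f).-1.

Lemma lead_dominates_realC (R : rcfType) (f : {poly int}) (t : R) :
  lead_dominates f t%:C = lead_dominates f t.
Proof.
rewrite /lead_dominates -ltcR rmorph_sum rmorphM rmorphXn rmorph_int.
by congr (_ < _); apply: eq_bigr => i _; rewrite rmorphM rmorphXn rmorph_int.
Qed.

Lemma lead_dominates_le {F : numDomainType} {f : {poly int}} {s t : F} :
  0 < s -> s <= t -> lead_dominates f s -> lead_dominates f t.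
Proof.
rewrite /lead_dominates => s_gt0 le_st dom_s; set m := (size f).-1 in dom_s *.
have t_gt0 : 0 < t := lt_le_trans s_gt0 le_st.
rewrite -(ltr_pM2l (exprn_gt0 m s_gt0)).
apply: (@le_lt_trans _ _ (t ^+ m * \sum_(i < m) `|f`_i|%:~R * s ^+ i)).
  rewrite !mulr_sumr; apply: ler_sum => i _.
  rewrite mulrCA [t ^+ m * _]mulrCA ler_wpM2l ?ler0z ?normr_ge0 //.
  have split_m : m = (m - i + i)%N by rewrite subnK // ltnW.
  rewrite [X in s ^+ X * _]split_m [X in _ <= t ^+ X * _]split_m !exprD -!mulrA.
  rewrite [s ^+ i * t ^+ i]mulrC.
  apply: ler_wpM2r; first by rewrite mulr_ge0 ?exprn_ge0 // ltW.
  by apply: lerXn2r; rewrite // nnegrE ltW.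
by rewrite mulrCA (mulrC (s ^+ m)) mulrCA ltr_pM2l ?exprn_gt0.
Qed.

Lemma norm_root_lt {F : numDomainType} (f : {poly int}) (t r : F) :
  0 < t -> lead_dominates f t -> root (map_poly intr f) r -> `|r| < t.
Proof.
move=> t_gt0 dom_t root_r; rewrite real_ltNge ?normr_real ?gtr0_real //.
apply/negP => le_tr; have := lead_dominates_le t_gt0 le_tr dom_t.
have f_neq0 : f != 0.
  apply: contraTneq dom_t => ->.
  by rewrite /lead_dominates size_poly0 big_ord0 lead_coef0 mul0r ltxx.
move: root_r; rewrite /root horner_coef (size_map_inj_poly (@intr_inj F)) //.
rewrite (polySpred f_neq0) big_ord_recr /= addr_eq0 => /eqP lead_eq.
rewrite /lead_dominates.
have -> : `|lead_coef f|%:~R * `|r| ^+ (size f).-1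
          = `|\sum_(i < (size f).-1) (map_poly intr f)`_i * r ^+ i|.
  by rewrite lead_eq normrN normrM normrX coef_map intr_norm.
move=> /lt_le_trans/(_ (ler_norm_sum _ _ _)).
under [X in _ < X]eq_bigr do rewrite normrM normrX coef_map -intr_norm.
by rewrite ltxx.
Qed.

Lemma norm_horner_gt {C : numClosedFieldType} {P : {poly C}} {t d x : C} :
  (1 < size P)%N -> 1 <= `|lead_coef P| -> (forall r, root P r -> `|r| < t) ->
  1 <= d -> t + d <= `|x| -> d < `|P.[x]|.
Proof.
move=> P_gt1 lc_ge1 roots_lt d_ge1 le_x.
have [[|z rs] def_P] := closed_field_poly_normal P.
  by move: P_gt1; rewrite def_P big_nil alg_polyC size_polyC; case: (_ != 0).
have lc_neq0 : lead_coef P != 0 by rewrite -normr_gt0 (lt_le_trans ltr01).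
have far_root y : y \in z :: rs -> d < `|x - y|.
  move=> y_in; apply: lt_le_trans (lerB_dist _ _).
  rewrite ltrBrDr; apply: lt_le_trans le_x.
  by rewrite addrC ltrD2r roots_lt // def_P rootZ // root_prod_XsubC.
rewrite def_P hornerZ normrM horner_prod normr_prod big_cons hornerXsubC.
apply: lt_le_trans (ler_peMl _ lc_ge1); last by rewrite mulr_ge0 ?prodr_ge0.
apply: lt_le_trans (far_root z (mem_head _ _)) (ler_peMr _ _) => //.
rewrite big_seq; apply: (big_ind (fun v => 1 <= v)) => // [u v|y y_in].
  exact: mulr_ege1.
by rewrite hornerXsubC ltW // (le_lt_trans d_ge1) // far_root // in_cons y_in orbT.
Qed.

Lemma lead_dominates_factor_value_gt {R : rcfType} {g h : {poly int}} {alpha : R}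
    {n d : nat} :
  0 < alpha -> lead_dominates (g * h) alpha -> (1 < size g)%N -> (0 < d)%N ->
  alpha + d%:R <= n%:R -> (d < `|g.[n%:Z]|)%N.
Proof.
move=> alpha_gt0 dom g_gt1 d_gt0 le_n.
have intrC_inj : injective (intr : int -> R[i]) := @intr_inj _.
set gC : {poly R[i]} := map_poly intr g.
have gC_gt1 : (1 < size gC)%N by rewrite size_map_inj_poly.
have lc_ge1 : 1 <= `|lead_coef gC|.
  rewrite lead_coef_map_inj // -intr_norm ler1z -gtz0_ge1 normr_gt0 lead_coef_eq0.
  by rewrite -size_poly_gt0 ltnW.
have roots_lt r : root gC r -> `|r| < alpha%:C.
  move=> root_r; apply: (norm_root_lt (g * h)).
  - by rewrite ltcR.
  - by rewrite lead_dominates_realC.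
  by rewrite rmorphM rootM root_r.
have d_ge1 : 1 <= d%:R :> R[i] by rewrite ler1n.
have le_nC : alpha%:C + d%:R <= `|n%:R : R[i]|.
  by rewrite normr_nat; move: le_n; rewrite -lecR rmorphD !rmorph_nat.
have := norm_horner_gt gC_gt1 lc_ge1 roots_lt d_ge1 le_nC.
rewrite -[n%:R]/((n%:Z)%:~R) horner_map -intr_norm -[d%:R]/((d%:Z)%:~R) ltr_int.
by rewrite -abszE ltz_nat.
Qed.

Lemma coef_comp_XaddC (R : comNzRingType) (f : {poly R}) (c : R) (m : nat) :
  (f \Po ('X + c%:P))`_m = (f^`N(m)).[c].
Proof.
rewrite /comp_poly addrC nderiv_taylor; last exact: mulrC.
rewrite size_map_polyC.
have -> : \sum_(i < size f) ((f^:P)^`N(i)).[c%:P] * 'X^i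
          = \poly_(i < size f) (f^`N(i)).[c].
  rewrite poly_def; apply: eq_bigr => i _.
  by rewrite nderivn_map horner_map /= mul_polyC.
by rewrite coef_poly; case: ltnP => // le_fm; rewrite nderivn_poly0 ?horner0.
Qed.

Lemma primitive_const_factor_unit (g h : {poly int}) :
  primitive_intpoly (g * h) -> (size g <= 1)%N -> g \is a GRing.unit.
Proof.
move=> prim /size1_polyC def_g.
have : (`|(g`_0)%R| %| 1)%N.
  rewrite -prim; apply/dvdn_biggcdP => i _; move: (nat_of_ord i) => j.
  by rewrite def_g coefCM coefC /= abszM dvdn_mulr.
rewrite dvdn1 => /eqP g0_abs1; rewrite def_g; apply: rmorph_unit.
by move: g0_abs1; case: (g`_0) => [[|[]]|[]].
Qed.

Lemma logn_split_pfactor {p k d a b : nat} :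
  prime p -> ~~ (p %| d)%N -> (0 < d)%N -> (a * b = p ^ k * d)%N ->
  (d < a)%N -> (d < b)%N ->
  [/\ 0 < logn p a, 0 < logn p b & logn p a + logn p b = k]%N.
Proof.
move=> p_pr pNd d_gt0 ab_eq d_lt_a d_lt_b.
have pos_of_lt x : (d < x)%N -> (0 < x)%N by apply: leq_ltn_trans.
have logn_pos x y : (x * y = p ^ k * d)%N -> (d < x)%N -> (0 < logn p x)%N.
  move=> xy_eq d_lt_x; rewrite logn_gt0 mem_primes p_pr pos_of_lt //=.
  apply: contraLR d_lt_x => pNx; rewrite -leqNgt dvdn_leq //.
  have co_x : coprime x (p ^ k) by rewrite coprimeXr // coprime_sym prime_coprime.
  by rewrite -(Gauss_dvdr _ co_x) -xy_eq dvdn_mulr.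
split; first exact: logn_pos ab_eq d_lt_a.
  by apply: (logn_pos b a _ d_lt_b); rewrite mulnC.
have p_gt0 := prime_gt0 p_pr.
rewrite -lognM ?pos_of_lt // ab_eq lognM ?expn_gt0 ?p_gt0 // pfactorK //.
by rewrite logn_coprime ?addn0 // prime_coprime.
Qed.

Theorem theorem1 (R : realType) (f : {poly int}) (alpha : R)
    (n d k l p : nat) :
  primitive_intpoly f ->
  0 < alpha ->
  (`|f`_(size f).-1|%:~R * alpha ^+ (size f).-1 >
     \sum_(i < (size f).-1) `|f`_i|%:~R * alpha ^+ i) ->
  (0 < n)%N -> (0 < d)%N -> (0 < k)%N -> (0 < l)%N ->
  (l <= (size f).-1)%N ->
  prime p -> ~~ (p %| d)%N ->
  alpha + d%:R <= n%:R ->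
  (f.[n%:Z] = (p ^ k * d)%N%:Z \/ f.[n%:Z] = - (p ^ k * d)%N%:Z) ->
  coprime k l ->
  (forall i : nat, (i < l)%N -> ((p ^ k)%N%:Z %| (f^`N(i)).[n%:Z])%Z) ->
  ((1 < k)%N -> ~~ ((p%:Z %| (f^`N(l)).[n%:Z])%Z)) ->
  irreducible_in_Zz f.
Proof.
move=> prim alpha_gt0 dom _ d_gt0 k_gt0 l_gt0 le_l p_pr pNd le_n f_n co_kl.
move=> dvd_low ndvd_l.
have f_gt1 : (1 < size f)%N by lia.
split; first by rewrite -size_poly_gt0 ltnW.
split; first by rewrite poly_unitE gtn_eqF.
move=> g h def_f; subst f.
have [g_le1|g_gt1] := leqP (size g) 1.
  by left; exact: primitive_const_factor_unit prim g_le1.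
have [h_le1|h_gt1] := leqP (size h) 1.
  by right; apply: (primitive_const_factor_unit h g); rewrite // mulrC.
have dom_gh : lead_dominates (g * h) alpha := dom.
have dom_hg : lead_dominates (h * g) alpha by rewrite mulrC.
have gn_gt := lead_dominates_factor_value_gt alpha_gt0 dom_gh g_gt1 d_gt0 le_n.
have hn_gt := lead_dominates_factor_value_gt alpha_gt0 dom_hg h_gt1 d_gt0 le_n.
have gh_n : (`|g.[n%:Z]| * `|h.[n%:Z]| = p ^ k * d)%N.
  by rewrite -abszM -hornerM; case: f_n => ->; rewrite ?abszN absz_nat.
have [vg_gt0 vh_gt0 vgh] := logn_split_pfactor p_pr pNd d_gt0 gh_n gn_gt hn_gt.
exfalso; have k_gt1 : (1 < k)%N by lia.
pose shift : {poly int} := 'X + (n%:Z)%:P.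
have coef_shift (P : {poly int}) m : (P \Po shift)`_m = (P^`N(m)).[n%:Z].
  exact: coef_comp_XaddC.
suff : (zlogn p (g \Po shift)`_0 + zlogn p (h \Po shift)`_0)%N != k.
  by rewrite !coef_shift !nderivn0 vgh eqxx.
apply: (newton_polygon_obstruction p k l) => //.
- by move=> m lt_ml; rewrite -comp_polyM coef_shift dvd_low.
- by rewrite -comp_polyM coef_shift ndvd_l.
- by rewrite coef_shift nderivn0.
- by rewrite coef_shift nderivn0.
Qed.
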